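(* Let $q>0$ and $\ell\in\{0,1,2,\ldots\}$. Then $$\tilde\gamma_\ell(q)=\lim_{\alpha\to\infty}\sum_{n=0}^{\alpha}(-1)^n\frac{\log^\ell(n+q)}{n+q},$$ where $\alpha$ runs through the nonnegative integers.
   Context: For $q>0$, $\zeta_E(z,q)=\sum_{n=0}^\infty (-1)^n (n+q)^{-z}$ for $\mathrm{Re}(z)>0$, extended by analytic continuation to an entire function of $z$. The modified Stieltjes constants $\tilde\gamma_k(q)$ are defined by the Taylor expansion $\zeta_E(z,q)=\sum_{k=0}^\infty\frac{(-1)^k\tilde\gamma_k(q)}{k!}(z-1)^k$. Convention: $\log^0 x=1$. *)

From Stdlib Require Import Reals.
From Coquelicot Require Import Coquelicot.
Open Scope R_scope.

(* Alternating Hurwitz zeta function on the real half-line x > 0: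
   zetaE x q = sum_{n>=0} (-1)^n (n+q)^(-x)   (convergent for x > 0, q > 0). *)
Definition zetaE (x q : R) : R :=
  Series (fun n : nat => (-1) ^ n * Rpower (INR n + q) (- x)).

(* Modified Stieltjes constants: zetaE(z,q) = sum_k (-1)^k gt_k(q)/k! (z-1)^k,
   i.e. gt_k(q) = (-1)^k * (d/dz)^k zetaE(z,q) at z = 1.  Since z = 1 lies in the
   half-plane Re z > 0 where the defining series converges and zetaE(.,q) is
   real-analytic on the real axis there, the Taylor coefficients at 1 are the
   real derivatives of the restriction to real z. *)
Definition gamma_tilde (k : nat) (q : R) : R :=
  (-1) ^ k * Derive_n (fun x => zetaE x q) k 1.

(** The Taylor coefficients of [zetaE(., q)] at [1] are the derivatives of the
    series term by term.  For [y > 0] the [j]-th derivative of the [n]-th term is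
    [(-1)^(n+j) ln(n+q)^j (n+q)^(-y)], an alternating series whose weights
    [s^j e^(-y s)] (with [s = ln(n+q)]) decrease to [0] once [s >= j / y].  The
    Leibniz estimate bounds its remainder by the first omitted weight uniformly in
    [y >= c > 0], so every differentiated series converges locally uniformly on
    [y > 0] and may be differentiated again term by term.  At [y = 1] the [l]-th
    differentiated series is, up to the sign [(-1)^l], the one in the theorem. *)

From Stdlib Require Import Reals Lra Lia FunctionalExtensionality.
From Coquelicot Require Import Coquelicot.
Open Scope R_scope.

Lemma neg1_pow_sqr n : (-1) ^ n * (-1) ^ n = 1.
Proof. rewrite <- Rpow_mult_distr. replace (-1 * -1) with 1 by ring. apply pow1. Qed.

Section Leibniz.

Variables (b : nat -> R) (N0 : nat).
Hypothesis b_antitone : forall n, (N0 <= n)%nat -> 0 <= b (S n) <= b n.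

Let a n := (-1) ^ n * b n.

Lemma alternating_block_bound k M : (N0 <= M)%nat ->
  0 <= (-1) ^ M * sum_n_m a M (M + k) <= b M.
Proof.
  revert M; induction k as [|k IH]; intros M HM.
  - rewrite Nat.add_0_r, sum_n_n; unfold a.
    rewrite <- Rmult_assoc, neg1_pow_sqr.
    pose proof (b_antitone M HM); lra.
  - rewrite sum_Sn_m by lia.
    rewrite Nat.add_succ_r, <- Nat.add_succ_l.
    pose proof (IH (S M) ltac:(lia)) as Htail.
    pose proof (b_antitone M HM).
    set (s := sum_n_m a (S M) (S M + k)) in *.
    unfold plus, a; simpl in *.
    rewrite Rmult_plus_distr_l, <- Rmult_assoc, neg1_pow_sqr.
    lra.
Qed.

Lemma alternating_block_abs M m : (N0 <= M)%nat -> Rabs (sum_n_m a M m) <= b M.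
Proof.
  intros HM.
  destruct (Nat.le_gt_cases M m) as [Hle | Hlt].
  - replace m with (M + (m - M))%nat by lia.
    pose proof (alternating_block_bound (m - M) M HM) as Hb.
    rewrite <- (Rmult_1_l (Rabs _)), <- (pow_1_abs M), <- Rabs_mult.
    rewrite Rabs_pos_eq; lra.
  - rewrite sum_n_m_zero by exact Hlt.
    unfold zero; simpl; rewrite Rabs_R0. pose proof (b_antitone M HM); lra.
Qed.

Hypothesis b_lim : is_lim_seq b 0.

Lemma ex_series_alternating : ex_series a.
Proof.
  apply (@ex_series_Cauchy R_AbsRing R_CompleteNormedModule); intros eps.
  destruct (proj2 (is_lim_seq_spec b 0) b_lim eps) as [N1 HN1].
  exists (N0 + N1)%nat; intros n m Hn _.
  eapply Rle_lt_trans; [apply (alternating_block_abs n m); lia |].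
  specialize (HN1 n ltac:(lia)). rewrite Rminus_0_r in HN1.
  eapply Rle_lt_trans; [apply RRle_abs | exact HN1].
Qed.

Lemma alternating_series_tail N : (N0 <= N)%nat ->
  Rabs (Series a - sum_n a N) <= b (S N).
Proof.
  intros HN.
  assert (Hlim : is_lim_seq (fun m => Rabs (sum_n a m - sum_n a N))
                   (Rabs (Series a - sum_n a N))).
  { apply (is_lim_seq_abs _ (Finite (Series a - sum_n a N))).
    apply is_lim_seq_minus'; [apply Series_correct, ex_series_alternating |].
    apply is_lim_seq_const. }
  refine (is_lim_seq_le_loc _ (fun _ => b (S N)) _ _ _ Hlim (is_lim_seq_const _)).
  exists N; intros m Hm.
  replace (sum_n a m - sum_n a N) with (sum_n_m a (S N) m)
    by exact (sum_n_m_sum_n a N m Hm).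
  apply alternating_block_abs; lia.
Qed.

End Leibniz.

Lemma pow_mul_exp_bound c s j : 0 < c -> 0 < s ->
  s ^ j * exp (- c * s) <= INR (Factorial.fact (S j)) / (c ^ S j * s).
Proof.
  intros Hc Hs.
  pose proof (INR_fact_lt_0 (S j)) as Hfact.
  assert (Htaylor : (c * s) ^ S j / INR (Factorial.fact (S j)) <= exp (c * s)).
  { eapply Rle_trans; [| apply (exp_ge_taylor (c * s) (S j)); nra].
    rewrite tech5.
    enough (0 <= sum_f_R0 (fun k => (c * s) ^ k / INR (Factorial.fact k)) j) by lra.
    apply cond_pos_sum; intros k.
    apply Rdiv_le_0_compat; [apply pow_le; nra | apply INR_fact_lt_0]. }
  assert (Hpos : 0 < (c * s) ^ S j / INR (Factorial.fact (S j)))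
    by (apply Rdiv_lt_0_compat; [apply pow_lt; nra | exact Hfact]).
  replace (- c * s) with (- (c * s)) by ring.
  rewrite exp_Ropp.
  apply Rle_trans with (s ^ j * / ((c * s) ^ S j / INR (Factorial.fact (S j)))).
  { apply Rmult_le_compat_l; [apply pow_le; lra |].
    apply Rinv_le_contravar; assumption. }
  assert (s ^ j <> 0) by (apply pow_nonzero; lra).
  assert (c ^ j <> 0) by (apply pow_nonzero; lra).
  right; rewrite Rpow_mult_distr, <- !tech_pow_Rmult; field; lra.
Qed.

Lemma is_lim_seq_pow_mul_exp c j (u : nat -> R) : 0 < c ->
  is_lim_seq u p_infty -> is_lim_seq (fun n => u n ^ j * exp (- c * u n)) 0.
Proof.
  intros Hc Hu.
  set (K := INR (Factorial.fact (S j)) / c ^ S j).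
  assert (Hc' : 0 < c ^ S j) by (apply pow_lt; lra).
  apply is_lim_seq_le_le_loc with (u := fun _ => 0) (w := fun n => K * / u n).
  - destruct (proj2 (is_lim_seq_spec u p_infty) Hu 0) as [N HN].
    exists N; intros n Hn; specialize (HN n Hn); split.
    + apply Rmult_le_pos; [apply pow_le; lra | left; apply exp_pos].
    + eapply Rle_trans; [apply pow_mul_exp_bound; assumption |].
      right; unfold K; field; lra.
  - apply is_lim_seq_const.
  - replace (Finite 0) with (Rbar_mult K (Rbar_inv p_infty))
      by (simpl; f_equal; ring).
    apply is_lim_seq_scal_l, is_lim_seq_inv; [exact Hu | discriminate].
Qed.

Lemma exp_le_compat x y : x <= y -> exp x <= exp y.
Proof. intros [Hlt | ->]; [left; apply exp_increasing, Hlt | right; reflexivity]. Qed.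

Lemma exp_pow_INR a j : exp a ^ j = exp (INR j * a).
Proof.
  induction j as [|j IH]; [simpl; now rewrite Rmult_0_l, exp_0 |].
  rewrite S_INR; simpl; rewrite IH, <- exp_plus; f_equal; ring.
Qed.

Lemma pow_mul_exp_antitone j y s s' : 0 < s -> s <= s' -> INR j <= y * s ->
  s' ^ j * exp (- y * s') <= s ^ j * exp (- y * s).
Proof.
  intros Hs Hss' Hj.
  assert (Hratio : (s' / s) ^ j <= exp (INR j * (s' / s - 1))).
  { rewrite <- exp_pow_INR.
    apply pow_incr; split; [apply Rdiv_le_0_compat; lra |].
    pose proof (exp_ineq1_le (s' / s - 1)); lra. }
  assert (Hexponent : INR j * (s' / s - 1) <= y * (s' - s)).
  { replace (INR j * (s' / s - 1)) with (INR j / s * (s' - s)) by (field; lra).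
    apply Rmult_le_compat_r; [lra |].
    apply (Rmult_le_reg_r s); [lra |].
    unfold Rdiv; rewrite Rmult_assoc, Rinv_l; lra. }
  replace (s' ^ j) with (s ^ j * (s' / s) ^ j)
    by (rewrite <- Rpow_mult_distr; f_equal; field; lra).
  rewrite Rmult_assoc; apply Rmult_le_compat_l; [apply pow_le; lra |].
  apply Rle_trans with (exp (INR j * (s' / s - 1)) * exp (- y * s')).
  { apply Rmult_le_compat_r; [left; apply exp_pos | exact Hratio]. }
  rewrite <- exp_plus; apply exp_le_compat; lra.
Qed.

Definition zeta_dterm (q : R) (j : nat) (y : R) (n : nat) : R :=
  (-1) ^ n * ((- ln (INR n + q)) ^ j * Rpower (INR n + q) (- y)).

Definition zeta_dpartial (q : R) (j N : nat) (y : R) : R := sum_n (zeta_dterm q j y) N.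

Definition zeta_dseries (q : R) (j : nat) (y : R) : R := Series (zeta_dterm q j y).

Definition log_weight (q : R) (j : nat) (y : R) (n : nat) : R :=
  ln (INR n + q) ^ j * exp (- y * ln (INR n + q)).

Lemma zeta_dterm_alternating q j y n :
  zeta_dterm q j y n = (-1) ^ j * ((-1) ^ n * log_weight q j y n).
Proof.
  unfold zeta_dterm, log_weight, Rpower.
  replace (- ln (INR n + q)) with (-1 * ln (INR n + q)) by ring.
  rewrite Rpow_mult_distr; ring.
Qed.

Lemma zetaE_zeta_dseries x q : zetaE x q = zeta_dseries q 0 x.
Proof. apply Series_ext; intros n; unfold zeta_dterm; simpl; ring. Qed.

Lemma is_lim_seq_ln_shift q : is_lim_seq (fun n => ln (INR n + q)) p_infty.
Proof.
  apply (is_lim_comp_seq ln (fun n => INR n + q) p_infty p_infty); [apply is_lim_ln_p | |].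
  - exists 0%nat; intros n _; discriminate.
  - apply (is_lim_seq_plus _ _ p_infty q); [apply is_lim_seq_INR | apply is_lim_seq_const |].
    reflexivity.
Qed.

Lemma log_weight_lim q j y : 0 < y -> is_lim_seq (log_weight q j y) 0.
Proof. intros Hy; apply is_lim_seq_pow_mul_exp; [exact Hy | apply is_lim_seq_ln_shift]. Qed.

Lemma log_weight_le q j c y n : c <= y -> 0 <= ln (INR n + q) ->
  log_weight q j y n <= log_weight q j c n.
Proof.
  intros Hcy Hln; unfold log_weight.
  apply Rmult_le_compat_l; [apply pow_le; lra |].
  apply exp_le_compat; nra.
Qed.

Lemma log_weight_antitone q j y n : 0 < q -> 0 < ln (INR n + q) ->
  INR j <= y * ln (INR n + q) -> 0 <= log_weight q j y (S n) <= log_weight q j y n.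
Proof.
  intros Hq Hln Hj; unfold log_weight; split.
  - apply Rmult_le_pos; [| left; apply exp_pos].
    apply pow_le; rewrite S_INR.
    apply Rlt_le, Rlt_le_trans with (1 := Hln).
    apply Rlt_le, ln_increasing; pose proof (pos_INR n); lra.
  - apply pow_mul_exp_antitone; [exact Hln | | exact Hj].
    rewrite S_INR; left; apply ln_increasing; pose proof (pos_INR n); lra.
Qed.

Lemma zeta_dseries_tail q j c : 0 < q -> 0 < c ->
  exists N0, forall y, c <= y ->
    ex_series (zeta_dterm q j y) /\
    forall N, (N0 <= N)%nat ->
      Rabs (zeta_dpartial q j N y - zeta_dseries q j y) <= log_weight q j c (S N).
Proof.
  intros Hq Hc.
  assert (Hjc : 0 <= INR j / c) by (apply Rdiv_le_0_compat; [apply pos_INR | lra]).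
  destruct (proj2 (is_lim_seq_spec _ p_infty) (is_lim_seq_ln_shift q) (INR j / c))
    as [N0 HN0].
  exists N0; intros y Hy.
  assert (Hanti : forall n, (N0 <= n)%nat ->
            0 <= log_weight q j y (S n) <= log_weight q j y n).
  { intros n Hn; specialize (HN0 n Hn).
    apply log_weight_antitone; [exact Hq | lra |].
    apply Rle_trans with (c * ln (INR n + q)); [| apply Rmult_le_compat_r; lra].
    apply (Rmult_le_reg_l (/ c)); [apply Rinv_0_lt_compat; lra |].
    rewrite <- Rmult_assoc, Rinv_l, Rmult_1_l by lra.
    rewrite Rmult_comm; unfold Rdiv in HN0; lra. }
  pose proof (log_weight_lim q j y ltac:(lra)) as Hlim.
  assert (Hdterm : zeta_dterm q j y
                   = fun n => (-1) ^ j * ((-1) ^ n * log_weight q j y n))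
    by (apply functional_extensionality; apply zeta_dterm_alternating).
  unfold zeta_dpartial, zeta_dseries; rewrite Hdterm; split.
  - exact (@ex_series_scal_l R_AbsRing R_NormedModule ((-1) ^ j) _
             (ex_series_alternating _ N0 Hanti Hlim)).
  - intros N HN.
    rewrite Series_scal_l, (sum_n_mult_l ((-1) ^ j)); unfold mult; simpl.
    rewrite <- Rmult_minus_distr_l, Rabs_mult, pow_1_abs, Rmult_1_l, Rabs_minus_sym.
    eapply Rle_trans; [apply (alternating_series_tail _ N0 Hanti Hlim N HN) |].
    apply log_weight_le; [exact Hy |].
    specialize (HN0 (S N) ltac:(lia)); lra.
Qed.

Lemma ex_series_zeta_dterm q j y : 0 < q -> 0 < y -> ex_series (zeta_dterm q j y).
Proof.
  intros Hq Hy; destruct (zeta_dseries_tail q j y Hq Hy) as [N0 Htail].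
  exact (proj1 (Htail y (Rle_refl y))).
Qed.

Lemma CVU_zeta_dpartial q j c : 0 < q -> 0 < c ->
  CVU_dom (zeta_dpartial q j) (fun y => c < y).
Proof.
  intros Hq Hc eps.
  destruct (zeta_dseries_tail q j c Hq Hc) as [N0 HN0].
  destruct (proj2 (is_lim_seq_spec _ _) (log_weight_lim q j c Hc) eps) as [N1 HN1].
  exists (N0 + N1)%nat; intros n Hn y Hy.
  change (Rabs (zeta_dpartial q j n y - zeta_dseries q j y) < eps).
  eapply Rle_lt_trans; [apply (proj2 (HN0 y (Rlt_le _ _ Hy))); lia |].
  specialize (HN1 (S n) ltac:(lia)); rewrite Rminus_0_r in HN1.
  eapply Rle_lt_trans; [apply RRle_abs | exact HN1].
Qed.

Lemma is_derive_zeta_dterm q j n y :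
  is_derive (fun y => zeta_dterm q j y n) y (zeta_dterm q (S j) y n).
Proof. unfold zeta_dterm, Rpower; auto_derive; [exact I | simpl; ring]. Qed.

Lemma is_derive_zeta_dpartial q j N y :
  is_derive (zeta_dpartial q j N) y (zeta_dpartial q (S j) N y).
Proof.
  unfold zeta_dpartial; induction N as [|N IH].
  - apply (is_derive_ext (fun y => zeta_dterm q j y 0)); [intros t; now rewrite sum_O |].
    rewrite sum_O; apply is_derive_zeta_dterm.
  - apply (is_derive_ext (fun y => plus (sum_n (zeta_dterm q j y) N) (zeta_dterm q j y (S N)))).
    { intros t; now rewrite sum_Sn. }
    rewrite sum_Sn; apply (is_derive_plus _ _ _ _ _ IH), is_derive_zeta_dterm.
Qed.

Lemma Derive_zeta_dpartial q j N : Derive (zeta_dpartial q j N) = zeta_dpartial q (S j) N.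
Proof.
  apply functional_extensionality; intros y.
  apply is_derive_unique, is_derive_zeta_dpartial.
Qed.

Lemma is_derive_zeta_dseries q j x : 0 < q -> 0 < x ->
  is_derive (zeta_dseries q j) x (zeta_dseries q (S j) x).
Proof.
  intros Hq Hx.
  assert (Hc : 0 < x / 2) by lra.
  assert (Hcont : forall n y, x / 2 < y -> continuity_pt (Derive (zeta_dpartial q j n)) y).
  { intros n y _; rewrite Derive_zeta_dpartial.
    apply continuity_pt_filterlim, (@ex_derive_continuous R_AbsRing R_NormedModule).
    eexists; apply is_derive_zeta_dpartial. }
  assert (Hcvu_derive : CVU_dom (fun n => Derive (zeta_dpartial q j n)) (fun y => x / 2 < y)).
  { replace (fun n => Derive (zeta_dpartial q j n)) with (zeta_dpartial q (S j))
      by (apply functional_extensionality; intros n; now rewrite Derive_zeta_dpartial).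
    apply CVU_zeta_dpartial; assumption. }
  pose proof (CVU_Derive (zeta_dpartial q j) (fun y => x / 2 < y) (open_gt _)
    ltac:(intros u v z Hu Hv [Huz Hzv]; lra) (CVU_zeta_dpartial q j _ Hq Hc)
    ltac:(intros n y _; eexists; apply is_derive_zeta_dpartial)
    Hcont Hcvu_derive x ltac:(lra)) as H.
  rewrite (Lim_seq_ext _ (fun n => zeta_dpartial q (S j) n x)) in H
    by (intros n; now rewrite Derive_zeta_dpartial).
  exact H.
Qed.

Lemma Derive_n_zeta_dseries q k x : 0 < q -> 0 < x ->
  Derive_n (zeta_dseries q 0) k x = zeta_dseries q k x.
Proof.
  intros Hq; revert x; induction k as [|k IH]; intros x Hx; [reflexivity |].
  simpl; rewrite (Derive_ext_loc _ (zeta_dseries q k)).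
  - apply is_derive_unique, is_derive_zeta_dseries; assumption.
  - destruct (open_gt 0 x Hx) as [e He].
    exists e; intros t Ht; apply IH, He, Ht.
Qed.

Lemma zeta_dpartial_at_1 q j N : 0 < q ->
  (-1) ^ j * zeta_dpartial q j N 1
  = sum_n (fun n => (-1) ^ n * (ln (INR n + q) ^ j / (INR n + q))) N.
Proof.
  intros Hq; unfold zeta_dpartial.
  rewrite <- (sum_n_mult_l ((-1) ^ j)); apply sum_n_ext; intros n.
  unfold mult; simpl; rewrite zeta_dterm_alternating; unfold log_weight.
  assert (Hpos : 0 < INR n + q) by (pose proof (pos_INR n); lra).
  replace (- (1) * ln (INR n + q)) with (- ln (INR n + q)) by ring.
  rewrite exp_Ropp, exp_ln by exact Hpos.
  rewrite <- !Rmult_assoc, neg1_pow_sqr; unfold Rdiv; ring.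
Qed.

Theorem corollary3p8 (q : R) (l : nat) (hq : 0 < q) :
  is_lim_seq
    (fun alpha : nat =>
       sum_n (fun n : nat => (-1) ^ n * (ln (INR n + q) ^ l / (INR n + q))) alpha)
    (gamma_tilde l q).
Proof.
  unfold gamma_tilde.
  rewrite (Derive_n_ext _ (zeta_dseries q 0)) by (intros t; apply zetaE_zeta_dseries).
  rewrite Derive_n_zeta_dseries by lra.
  apply (is_lim_seq_ext (fun N => (-1) ^ l * zeta_dpartial q l N 1));
    [intros N; apply zeta_dpartial_at_1, hq |].
  apply (is_lim_seq_scal_l _ _ (zeta_dseries q l 1)), Series_correct, ex_series_zeta_dterm;
    [exact hq | lra].
Qed.
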